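(* Let $V$ be an $\mathcal{H}$-module vertex algebra and let $W=\bigoplus_{n\in\mathbb{Z}}W_n$ be a $(V,\mathcal{H})$-module. Then every $f\in\mathrm{Hom}_{(V,\mathcal{H})}(V,W)$ satisfies $f(V_n)\subset W_n$ for all $n\in\mathbb{Z}$.
   Context: Throughout, $\mathbb{F}$ is an algebraically closed field of odd prime characteristic $p$; vertex algebras and modules are over $\mathbb{F}$. Every vertex algebra $V$ is a module for the bialgebra $\mathcal{B}$ with basis $\{\mathcal{D}^{(n)}\}_{n\in\mathbb{N}}$, $\mathcal{D}^{(m)}\mathcal{D}^{(n)}=\binom{m+n}{n}\mathcal{D}^{(m+n)}$, via $\mathcal{D}^{(n)}v=v_{-n-1}\mathbf{1}$. $\mathcal{H}$: let $\mathfrak{sl}_2$ over $\mathbb{C}$ have basis $L_{-1},L_0,L_1$ with $[L_1,L_{-1}]=2L_0$, $[L_0,L_{\pm1}]=\mp L_{\pm1}$; put $L_{\pm1}^{(n)}=L_{\pm1}^n/n!$, $L_0^{(n)}=\binom{-2L_0}{n}$ in $U(\mathfrak{sl}_2)$; $U(\mathfrak{sl}_2)_{\mathbb{Z}}$ is the $\mathbb{Z}$-span of the $L_{-1}^{(i)}L_0^{(j)}L_1^{(k)}$, and $\mathcal{H}=\mathbb{F}\otimes_{\mathbb{Z}}U(\mathfrak{sl}_2)_{\mathbb{Z}}$. $e^{zL_{\pm1}}=\sum_{n\ge0}z^nL_{\pm1}^{(n)}$. For $v$ homogeneous of degree $n$, $f(z)^{\deg}v:=f(z)^nv$, extended linearly.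 A $\mathbb{Z}$-graded vertex algebra: $V=\bigoplus V_n$, $\mathbf{1}\in V_0$, $u_rV_n\subset V_{m+n-r-1}$ for $u\in V_m$. A $\mathbb{Z}$-graded weight $\mathcal{H}$-module: $W=\bigoplus W_n$ with $\mathcal{H}$-action, $L_{\pm1}^{(r)}W_n\subset W_{n\mp r}$, $L_0^{(r)}|_{W_n}=\binom{-2n}{r}$. An $\mathcal{H}$-module vertex algebra: a $\mathbb{Z}$-graded vertex algebra $V$ which is a $\mathbb{Z}$-graded weight $\mathcal{H}$-module with $L_{-1}^{(n)}=\mathcal{D}^{(n)}$, such that $V_n=0$ for $n\ll0$, $L_1^{(n)}\mathbf{1}=\delta_{n,0}\mathbf{1}$, and $e^{zL_1}Y(v,z_0)e^{-zL_1}=Y\bigl(e^{z(1-zz_0)L_1}(1-zz_0)^{-2\deg}v,z_0/(1-zz_0)\bigr)$ for $v\in V$. A $(V,\mathcal{H})$-module: a $\mathbb{Z}$-graded weight $\mathcal{H}$-module $W$ which is a $\mathbb{Z}$-graded $V$-module ($v_mW_n\subset W_{k+n-m-1}$ for $v\in V_k$) satisfying $e^{zL_{-1}}Y_W(v,x)e^{-zL_{-1}}=Y_W(e^{zL_{-1}}v,x)$ and $e^{zL_1}Y_W(v,z_0)e^{-zL_1}=Y_W\bigl(e^{z(1-zz_0)L_1}(1-zz_0)^{-2\deg}v,z_0/(1-zz_0)\bigr)$. $\mathrm{Hom}_{(V,\mathcal{H})}(V,W)$ is the space of linear maps that are both $V$-module and $\mathcal{H}$-module homomorphisms. *)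

From HB Require Import structures.
From mathcomp Require Import all_boot all_order all_algebra.
Set Implicit Arguments. Unset Strict Implicit. Unset Printing Implicit Defensive.
Import Order.TTheory GRing.Theory Num.Theory.
Local Open Scope ring_scope.

Definition binz (N : int) (i : nat) : int :=
  match N with
  | Posz n => ('C(n, i))%:Z
  | Negz n => (-1) ^+ i * ('C(n + i, i))%:Z
  end.

Definition msign (R : pzRingType) (l : int) : R := (-1) ^+ (absz l).

Section Defs.
Variable F : fieldType.

Definition is_grading (V : lmodType F) (G : int -> V -> Prop) : Prop :=
  [/\ (forall n, G n 0),
      (forall n (a : F) x y, G n x -> G n y -> G n (a *: x + y)),
      (forall v : V, exists s : seq (int * V),
          (forall x, x \in s -> G x.1 x.2) /\ v = \sum_(x <- s) x.2) &
      (forall s : seq (int * V), uniq (map fst s) ->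
          (forall x, x \in s -> G x.1 x.2) -> \sum_(x <- s) x.2 = 0 ->
          forall x, x \in s -> x.2 = 0)].

Definition is_lin (U W : lmodType F) (f : U -> W) : Prop :=
  forall (a : F) x y, f (a *: x + y) = a *: f x + f y.

(* Y n u w = u_n w ; Borcherds (Jacobi) identity, coefficientwise:
   sum_i C(m,i) (u_{l+i} v)_{m+n-i} w
     = sum_i (-1)^i C(l,i) (u_{l+m-i} v_{n+i} w - (-1)^l v_{l+n-i} u_{m+i} w).
   The sums are finite by truncation; we require equality of all
   sufficiently long partial sums. *)
Definition borcherds (V W : lmodType F) (Y : int -> V -> V -> V)
    (YW : int -> V -> W -> W) : Prop :=
  forall (u v : V) (w : W) (l m n : int), exists K : nat, forall K' : nat,
    (K <= K')%N ->
    \sum_(i < K') (binz m i)%:~R *: YW (m + n - (i : nat)%:Z) (Y (l + (i : nat)%:Z) u v) w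
    = \sum_(i < K') ((-1) ^+ (i : nat) * (binz l i)%:~R) *:
        (YW (l + m - (i : nat)%:Z) u (YW (n + (i : nat)%:Z) v w)
         - msign F l *: YW (l + n - (i : nat)%:Z) v (YW (m + (i : nat)%:Z) u w)).

Definition is_va_module (V W : lmodType F) (vac : V) (Y : int -> V -> V -> V)
    (YW : int -> V -> W -> W) : Prop :=
  [/\ (forall n u, is_lin (YW n u)),
      (forall n w, is_lin (fun u => YW n u w)),
      (forall u w, exists N : int, forall n, N <= n -> YW n u w = 0),
      (forall n w, YW n vac w = if n == -1 then w else 0) &
      borcherds Y YW].

Definition is_vertex_algebra (V : lmodType F) (vac : V) (Y : int -> V -> V -> V)
  : Prop :=
  [/\ is_va_module vac Y Y,
      (forall n u, 0 <= n -> Y n u vac = 0) &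
      (forall u, Y (-1) u vac = u)].

(* Z-graded weight H-module: operators Lm1 n = L_{-1}^{(n)}, L0 n = L_0^{(n)},
   L1 n = L_1^{(n)}, subject to the defining relations of the hyperalgebra
   H = F (x) U(sl_2)_Z (divided powers, Kostant's commutation formula) on a
   weight module. *)
Definition is_weight_Hmodule (W : lmodType F) (G : int -> W -> Prop)
    (Lm1 L0 L1 : nat -> W -> W) : Prop :=
  is_grading G /\
  [/\ (forall n, is_lin (Lm1 n) /\ is_lin (L0 n) /\ is_lin (L1 n)),
      (forall w, Lm1 0%N w = w /\ L1 0%N w = w),
      (forall a b w, Lm1 a (Lm1 b w) = ('C(a + b, b))%:R *: Lm1 (a + b)%N w
                  /\ L1 a (L1 b w) = ('C(a + b, b))%:R *: L1 (a + b)%N w),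
      (forall (n : int) (r : nat) w, G n w ->
          [/\ G (n + r%:Z) (Lm1 r w), G (n - r%:Z) (L1 r w) &
              L0 r w = (binz (-2 * n) r)%:~R *: w]) &
      (forall (n : int) (a b : nat) w, G n w ->
          L1 a (Lm1 b w) =
          \sum_(t < (minn a b).+1)
             ((-1) ^+ (t : nat) * (binz (-2 * n + a%:Z - b%:Z) t)%:~R) *:
               Lm1 (b - t)%N (L1 (a - t)%N w))].

(* Coefficientwise form of
   e^{zL1} Y(v,z0) e^{-zL1} = Y(e^{z(1-zz0)L1}(1-zz0)^{-2deg} v, z0/(1-zz0))
   for homogeneous v of degree d: the coefficient of z^k z0^{-r-1} applied to w. *)
Definition mobius_cond (V W : lmodType F) (GV : int -> V -> Prop)
    (YW : int -> V -> W -> W) (L1V : nat -> V -> V) (L1W : nat -> W -> W) : Prop :=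
  forall (d : int) (v : V) (w : W) (k : nat) (r : int), GV d v ->
    \sum_(a < k.+1) (-1) ^+ (k - a)%N *: L1W a (YW r v (L1W (k - a)%N w))
    = \sum_(i < k.+1)
        ((-1) ^+ (i : nat) * (binz ((k - i)%N%:Z - 2 * d + r + (i : nat)%:Z + 1) i)%:~R)
          *: YW (r + (i : nat)%:Z) (L1V (k - i)%N v) w.

(* e^{zL_{-1}} Y_W(v,x) e^{-zL_{-1}} = Y_W(e^{zL_{-1}} v, x), coefficientwise. *)
Definition lm1_cond (V W : lmodType F) (YW : int -> V -> W -> W)
    (Lm1V : nat -> V -> V) (Lm1W : nat -> W -> W) : Prop :=
  forall (v : V) (w : W) (k : nat) (r : int),
    \sum_(a < k.+1) (-1) ^+ (k - a)%N *: Lm1W a (YW r v (Lm1W (k - a)%N w))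
    = YW r (Lm1V k v) w.

Definition is_H_module_VA (V : lmodType F) (GV : int -> V -> Prop) (vac : V)
    (Y : int -> V -> V -> V) (Lm1 L0 L1 : nat -> V -> V) : Prop :=
  is_vertex_algebra vac Y /\ is_weight_Hmodule GV Lm1 L0 L1 /\
  [/\ GV 0 vac /\ (forall (m n r : int) u v, GV m u -> GV n v ->
                     GV (m + n - r - 1) (Y r u v)),
      (forall (n : nat) v, Lm1 n v = Y (- n%:Z - 1) v vac),
      (exists N : int, forall n v, n < N -> GV n v -> v = 0),
      (forall n : nat, L1 n vac = if n == 0%N then vac else 0) &
      mobius_cond GV Y L1 L1].

Definition is_VH_module (V W : lmodType F) (GV : int -> V -> Prop) (vac : V)
    (Y : int -> V -> V -> V) (Lm1V L1V : nat -> V -> V)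
    (GW : int -> W -> Prop) (YW : int -> V -> W -> W)
    (Lm1W L0W L1W : nat -> W -> W) : Prop :=
  [/\ is_weight_Hmodule GW Lm1W L0W L1W,
      is_va_module vac Y YW,
      (forall (k n m : int) v w, GV k v -> GW n w -> GW (k + n - m - 1) (YW m v w)),
      lm1_cond YW Lm1V Lm1W &
      mobius_cond GV YW L1V L1W].

Definition is_VH_hom (V W : lmodType F) (Y : int -> V -> V -> V)
    (Lm1V L0V L1V : nat -> V -> V) (YW : int -> V -> W -> W)
    (Lm1W L0W L1W : nat -> W -> W) (f : V -> W) : Prop :=
  [/\ is_lin f,
      (forall n u v, f (Y n u v) = YW n u (f v)) &
      (forall (n : nat) v, [/\ f (Lm1V n v) = Lm1W n (f v),
                               f (L0V n v) = L0W n (f v) &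
                               f (L1V n v) = L1W n (f v)])].

End Defs.

(* Since f commutes with the vertex operators and v = v_{-1} 1, we get
   f v = v_{-1} f(1), and v_{-1} raises degrees by deg v; so it suffices that
   f(1) lies in W_0.  As f commutes with the L_0^{(r)}, which kill 1 in V_0,
   f(1) is killed by every L_0^{(r)} with r > 0.  On W_n the operator
   L_0^{(r)} is the scalar binom(-2n, r), and for n <> 0 some r > 0 makes it
   nonzero in characteristic p (r = -2n when n < 0, and r = p^(2n-1) when
   n > 0), so every homogeneous component of f(1) outside degree 0 vanishes. *)

From HB Require Import structures.
From mathcomp Require Import all_boot all_order all_algebra.
Set Implicit Arguments.
Unset Strict Implicit.
Unset Printing Implicit Defensive.

Import Order.TTheory GRing.Theory Num.Theory.
Local Open Scope ring_scope.

Section LinearMaps.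
Variables (F : fieldType) (U W : lmodType F) (f : U -> W).
Hypothesis f_lin : is_lin f.

Lemma is_lin0 : f 0 = 0.
Proof. by have := f_lin (-1) 0 0; rewrite scaler0 addr0 scaleN1r addNr. Qed.

Lemma is_linD x y : f (x + y) = f x + f y.
Proof. by rewrite -[x in LHS]scale1r f_lin scale1r. Qed.

Lemma is_lin_sum (I : Type) (s : seq I) (g : I -> U) :
  f (\sum_(i <- s) g i) = \sum_(i <- s) f (g i).
Proof.
elim: s => [|i s IHs]; first by rewrite !big_nil is_lin0.
by rewrite !big_cons is_linD IHs.
Qed.

End LinearMaps.

Section Grading.
Variables (F : fieldType) (W : lmodType F) (G : int -> W -> Prop).
Hypothesis HG : is_grading G.

Lemma grading0 n : G n 0.
Proof. by case: HG. Qed.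

Lemma gradingZ n a x : G n x -> G n (a *: x).
Proof. by case: HG => G0 GZD _ _ Gx; rewrite -[a *: x]addr0; apply: GZD. Qed.

Lemma gradingD n x y : G n x -> G n y -> G n (x + y).
Proof. by case: HG => _ GZD _ _ Gx Gy; rewrite -[x]scale1r; apply: GZD. Qed.

Lemma grading_sum n (I : eqType) (s : seq I) (P : pred I) (g : I -> W) :
  (forall i, i \in s -> P i -> G n (g i)) -> G n (\sum_(i <- s | P i) g i).
Proof.
elim: s => [|i s IHs] Gs; first by rewrite big_nil; apply: grading0.
have Gtl : G n (\sum_(j <- s | P j) g j).
  by apply: IHs => j js; apply: Gs; rewrite inE js orbT.
by rewrite big_cons; case: ifP => // Pi; apply: gradingD => //; apply: Gs; rewrite ?mem_head.
Qed.

Definition homogeneous_seq (s : seq (int * W)) := forall x, x \in s -> G x.1 x.2.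

Lemma grading_decomp_uniq w : exists s : seq (int * W),
  [/\ uniq (map fst s), homogeneous_seq s & w = \sum_(x <- s) x.2].
Proof.
case: HG => _ _ Gdec _; have [s [Gs ->]] := Gdec w.
pose degs := undup (map fst s).
exists [seq (d, \sum_(x <- s | x.1 == d) x.2) | d <- degs]; split.
- by rewrite -map_comp map_id_in ?undup_uniq.
- move=> _ /mapP [d _ ->] /=; apply: grading_sum => x xs /eqP <-; exact: Gs.
rewrite big_map (exchange_big_dep predT) //=; apply: eq_big_seq => x xs.
rewrite (eq_bigl (pred1 x.1)) => [|d]; last by rewrite /= eq_sym.
by rewrite -big_filter filter_pred1_uniq ?undup_uniq ?mem_undup ?map_f ?big_seq1.
Qed.

Lemma homogeneous_comb_eq0 (s : seq (int * W)) (c : int -> F) :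
    uniq (map fst s) -> homogeneous_seq s -> \sum_(x <- s) c x.1 *: x.2 = 0 ->
  forall x, x \in s -> c x.1 != 0 -> x.2 = 0.
Proof.
case: HG => _ _ _ Gindep us Gs sum0 x xs cx.
pose cs := [seq (y.1, c y.1 *: y.2) | y <- s].
have /eqP : (x.1, c x.1 *: x.2).2 = 0.
  apply: (Gindep cs) => [|||]; last exact: map_f.
  - by rewrite -map_comp.
  - by move=> _ /mapP [y ys ->]; apply/gradingZ/(Gs _ ys).
  - by rewrite big_map.
by rewrite scaler_eq0 (negbTE cx) => /eqP.
Qed.

Lemma grading_mem_of_eigen_kernel (T : nat -> W -> W) (lam : int -> nat -> F)
    (n0 : int) :
    (forall r, is_lin (T r)) ->
    (forall n r w, G n w -> T r w = lam n r *: w) ->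
    (forall n, n != n0 -> exists r, lam n r != 0) ->
  forall w, (forall r, T r w = 0) -> G n0 w.
Proof.
move=> T_lin T_eigen lam_neq0 w Tw0.
have [s [us Gs w_s]] := grading_decomp_uniq w; rewrite {}w_s in Tw0 *.
apply: grading_sum => x xs _; have [<-|x_n0] := eqVneq x.1 n0; first exact: Gs.
have [r lam_r] := lam_neq0 _ x_n0.
suff -> : x.2 = 0 by apply: grading0.
apply: (homogeneous_comb_eq0 (c := lam^~ r) us Gs _ xs lam_r).
rewrite -[RHS](Tw0 r) (is_lin_sum (T_lin r)); apply: eq_big_seq => y ys.
by rewrite (T_eigen y.1) //; apply: Gs.
Qed.

End Grading.

Lemma coef_1addX_exp (R : comNzRingType) n i :
  ((1 + 'X : {poly R}) ^+ n)`_i = 'C(n, i)%:R.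
Proof.
have -> : (1 + 'X : {poly R}) ^+ n = \poly_(j < n.+1) 'C(n, j)%:R.
  by rewrite poly_def exprDn; apply: eq_bigr => j _; rewrite expr1n mul1r scaler_nat.
by rewrite coef_poly; case: ltnP => // /bin_small ->.
Qed.

Section PositiveCharacteristic.
Variables (R : comNzRingType) (p : nat).
Hypothesis charR : p \in [pchar R].

(* Compare the coefficients of X^(p^e) in (1 + X)^(m + p^e) = (1 + X)^m (1 + X^(p^e)). *)
Lemma pchar_bin_addn_pexp e m : (m < p ^ e)%N -> 'C(m + p ^ e, p ^ e)%:R = 1 :> R.
Proof.
move=> m_lt; rewrite -coef_1addX_exp exprD [X in _ * X]exprDn_pchar; last first.
  rewrite (eq_pnat _ (pchar_poly R)) (eq_pnat _ (pcharf_eq charR)).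
  by rewrite pnatX pnat_id ?(pcharf_prime charR).
rewrite expr1n mulrDr mulr1 coefD coefMXn ltnn subnn !coef_1addX_exp.
by rewrite bin_small // bin0 add0r.
Qed.

Lemma binz_neq0 (N : int) : N != 0 -> exists r, (binz N r.+1)%:~R != 0 :> R.
Proof.
case: N => [[|n] // _ | n _]; first by exists n; rewrite /= binn oner_neq0.
have p_gt1 := prime_gt1 (pcharf_prime charR).
exists (p ^ n).-1; rewrite prednK; last by rewrite expn_gt0 ltnW.
rewrite /binz intrM intr_sign -pmulrn pchar_bin_addn_pexp; last exact: ltn_expl.
by rewrite mulr1 signr_eq0.
Qed.

End PositiveCharacteristic.

Lemma weight_Hmodule_deg0P (F : fieldType) (p : nat) (charF : p \in [pchar F])
    (W : lmodType F) (G : int -> W -> Prop) (Lm1 L0 L1 : nat -> W -> W) :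
    is_weight_Hmodule G Lm1 L0 L1 ->
  forall w, G 0 w <-> forall r, L0 r.+1 w = 0.
Proof.
case=> HG [L_lin _ _ L_weight _] w; split=> [G0w r | L0w].
  by have [_ _ ->] := L_weight 0 r.+1 w G0w; rewrite mulr0 /= bin0n scale0r.
apply: (grading_mem_of_eigen_kernel HG (T := fun r => L0 r.+1)
  (lam := fun n r => (binz (-2 * n) r.+1)%:~R)) => // [r | n r v Gv | n n0].
- by case: (L_lin r.+1) => _ [].
- by have [_ _ ->] := L_weight n r.+1 v Gv.
by apply: (binz_neq0 charF); rewrite mulf_neq0.
Qed.

Theorem lemma3p13 (F : closedFieldType) (p : nat) (p_prime : prime p)
    (p_odd : odd p) (charF : p \in [pchar F])
    (V : lmodType F) (GV : int -> V -> Prop) (vac : V) (Y : int -> V -> V -> V)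
    (Lm1V L0V L1V : nat -> V -> V)
    (HV : is_H_module_VA GV vac Y Lm1V L0V L1V)
    (W : lmodType F) (GW : int -> W -> Prop) (YW : int -> V -> W -> W)
    (Lm1W L0W L1W : nat -> W -> W)
    (HW : is_VH_module GV vac Y Lm1V L1V GW YW Lm1W L0W L1W)
    (f : V -> W) (Hf : is_VH_hom Y Lm1V L0V L1V YW Lm1W L0W L1W f) :
  forall (n : int) (v : V), GV n v -> GW n (f v).
Proof.
case: HV => [[_ _ vac_creation] [HVmod [[Gvac _] _ _ _ _]]].
case: HW => [HWmod _ GW_Y _ _]; case: Hf => [f_lin fY fL].
have Gfvac : GW 0 (f vac).
  apply/(weight_Hmodule_deg0P charF HWmod) => r; have [_ <- _] := fL r.+1 vac.
  by have /(_ r) -> := (weight_Hmodule_deg0P charF HVmod vac).1 Gvac; rewrite is_lin0.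
move=> n v Gv; rewrite -[v]vac_creation fY.
by have := GW_Y n 0 (-1) v (f vac) Gv Gfvac; rewrite addr0 opprK addrK.
Qed.
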